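(* Let $k\ge 2$, let $a_1\ge a_2\ge\cdots\ge a_k\ge 1$ be integers, and put $t=\sum_{i=1}^k a_i$. Let $G$ be a graph of order $n>t^2-t-1$ which does not contain the disjoint union $\bigcup_{i=1}^k P_{2a_i}$ as a subgraph. If $e(G)\ge (t-1)n-(t^2-t-1)$, then there exists an induced subgraph $H$ of $G$ such that $|V(H)|\ge n-(t^2-t-1)$, $\delta(H)\ge t-1$, and $d_H(v)\le t-2$ for every vertex $v\in V(G)\setminus V(H)$.
   Context: All graphs are finite and simple. $P_m$ is the path on $m$ vertices, $e(G)$ is the number of edges of $G$, $\delta(H)$ the minimum degree of $H$, and $d_H(v)=|N(v)\cap V(H)|$ is the number of neighbours of $v$ lying in $V(H)$. *)

From mathcomp Require Import all_boot.
Set Implicit Arguments.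
Unset Strict Implicit.
Unset Printing Implicit Defensive.

(* A simple graph on a finite vertex type T is a symmetric irreflexive
   relation e : rel T (these properties are hypotheses of the theorem). *)

Definition num_edges (T : finType) (e : rel T) : nat :=
  #|[set A : {set T} | [exists x, [exists y, (A == [set x; y]) && e x y]]]|.

Definition deg_in (T : finType) (e : rel T) (S : {set T}) (v : T) : nat :=
  #|[set u in S | e v u]|.

(* G contains the disjoint union of paths P_{2 a_0}, ..., P_{2 a_(k-1)} as a
   (not necessarily induced) subgraph: there are k vertex sequences, the i-th
   of length 2 a_i, consecutive vertices adjacent, all vertices pairwise distinct. *)
Definition contains_path_forest (T : finType) (e : rel T) (k : nat) (a : nat -> nat) : Prop :=
  exists ps : seq (seq T),
    [/\ size ps = k,
        (forall i, i < k -> size (nth [::] ps i) = (a i).*2 /\ sorted e (nth [::] ps i))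
      & uniq (flatten ps)].

From mathcomp Require Import all_boot zify.
Set Implicit Arguments.
Unset Strict Implicit.
Unset Printing Implicit Defensive.

(* Let S be the (t-1)-core of G, the largest vertex set inducing minimum degree
   at least t-1; by maximality, every vertex outside S has at most t-2
   neighbours in S.  Deleting the vertices outside S one at a time, each of
   degree at most t-2 when it is deleted, loses at most (t-2)(n-|S|) edges.
   A path on 2t vertices would cut into the forest of paths P_(2 a_i), so by
   the Erdos-Gallai theorem e(G[S]) <= (t-1)|S|.  Hence
   (t-1)n - (t^2-t-1) <= e(G) <= (t-1)|S| + (t-2)(n-|S|), i.e.
   |S| >= n - (t^2-t-1).
   Erdos-Gallai is proved by the classical induction: delete a vertex of
   degree < t, or split a disconnected graph, or else grow a path to 2t
   vertices in a connected graph of minimum degree >= t, closing it into a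
   cycle by Posa's crossing argument whenever it cannot be extended at an end. *)

Section Degrees.

Variables (T : finType) (e : rel T).
Hypotheses (e_sym : symmetric e) (e_irr : irreflexive e).

Definition deg_sum (S : {set T}) : nat := \sum_(x in S) deg_in e S x.

Lemma deg_in_subset (A B : {set T}) v :
  A \subset B -> deg_in e A v <= deg_in e B v.
Proof.
move=> sAB; apply: subset_leq_card; apply/subsetP => u; rewrite !inE.
by case/andP => uA ->; rewrite (subsetP sAB u uA).
Qed.

Lemma deg_in_le_card (S : {set T}) v : deg_in e S v <= #|S :\ v|.
Proof.
apply: subset_leq_card; apply/subsetP => u; rewrite !inE => /andP[-> evu].
by rewrite andbT; apply: contraTneq evu => ->; rewrite e_irr.
Qed.

Lemma deg_in_le_count (S : {set T}) v (s : seq T) :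
  uniq s -> {in S, forall u, e v u -> u \in s} -> deg_in e S v <= count (e v) s.
Proof.
move=> us sNs; rewrite -size_filter -(card_uniqP (filter_uniq _ us)).
apply: subset_leq_card; apply/subsetP => u; rewrite inE mem_filter.
by case/andP => uS evu; rewrite evu sNs.
Qed.

Lemma deg_sum_setD1 (S : {set T}) v :
  v \in S -> deg_sum S = deg_sum (S :\ v) + (deg_in e S v).*2.
Proof.
move=> vS; have deg_setD1 x : deg_in e S x = e x v + deg_in e (S :\ v) x.
  rewrite /deg_in (cardsD1 v) !inE vS /=; congr (_ + _).
  by apply: eq_card => u; rewrite !inE andbA.
have sum_setD1 : \sum_(x in S :\ v) deg_in e S x = deg_sum (S :\ v) + deg_in e S v.
  rewrite (eq_bigr _ (fun x _ => deg_setD1 x)) big_split /= addnC; congr (_ + _).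
  rewrite /deg_in -sum1_card big_mkcond [RHS]big_mkcond /=.
  apply: eq_bigr => u _; rewrite !inE e_sym.
  by case: eqVneq => [->|_]; rewrite ?e_irr ?andbF //=; case: (u \in S) (e v u) => [] [].
by rewrite [deg_sum S]/deg_sum (big_setD1 v vS) /= sum_setD1 -addnn; lia.
Qed.

Lemma double_num_edges_le : (num_edges e).*2 <= deg_sum setT.
Proof.
pose arcs := [set p : T * T | e p.1 p.2].
pose ends (p : T * T) := [set p.1; p.2].
have arcsE : #|arcs| = deg_sum setT.
  rewrite -sum1_card big_mkcond /=.
  under eq_bigr => p _ do rewrite inE.
  rewrite -(pair_bigA _ (fun x y => if e x y then 1 else 0)) /deg_sum [RHS]big_mkcond /=.
  apply: eq_bigr => x _; rewrite inE /deg_in -sum1_card [RHS]big_mkcond /=.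
  by apply: eq_bigr => y _; rewrite !inE.
have edges_sub :
    [set A : {set T} | [exists x, [exists y, (A == [set x; y]) && e x y]]]
      \subset ends @: arcs.
  apply/subsetP => A; rewrite inE => /existsP[x /existsP[y /andP[/eqP -> exy]]].
  by apply/imsetP; exists (x, y); rewrite ?inE.
rewrite -arcsE -sum1_card (partition_big_imset ends) /=.
apply: (@leq_trans (#|ends @: arcs| * 2)).
  by rewrite muln2 leq_double subset_leq_card.
rewrite -sum_nat_const; apply: leq_sum => A /imsetP[[x y]]; rewrite inE /= => exy ->.
have xy : (x, y) != (y, x) by apply: contraTneq exy => -[-> _]; rewrite e_irr.
apply: leq_trans (_ : #|[set (x, y); (y, x)]| <= _); first by rewrite cards2 xy.
rewrite sum1_card; apply/subset_leq_card/subsetP => p.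
rewrite !inE => /orP[] /eqP ->; rewrite unfold_in !inE; first by rewrite exy eqxx.
by rewrite e_sym exy /ends setUC eqxx.
Qed.

Lemma deg_sum_split (S C : {set T}) :
  C \subset S -> {in C & S :\: C, forall x y, ~~ e x y} ->
  deg_sum S = deg_sum C + deg_sum (S :\: C).
Proof.
move=> CS noCD; rewrite /deg_sum (big_setID C) /= (setIidPr CS); congr (_ + _).
  apply: eq_bigr => x xC; apply: eq_card => u; rewrite !inE.
  case: (boolP (u \in C)) => [/(subsetP CS) -> //|uC].
  by case: (boolP (u \in S)) => uS //; rewrite (negbTE (noCD x u xC _)) // !inE uC.
apply: eq_bigr => x xD; apply: eq_card => u; rewrite !inE.
case: (boolP (u \in C)) => uC //=; rewrite ?andbF // e_sym.
by rewrite (negbTE (noCD u x uC xD)) andbF.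
Qed.

Lemma deg_sum_le_card (S : {set T}) : deg_sum S <= #|S| * #|S|.-1.
Proof.
rewrite /deg_sum -sum_nat_const; apply: leq_sum => x xS.
by rewrite (leq_trans (deg_in_le_card S x)) // (cardsD1 x S) xS.
Qed.

End Degrees.

Section Paths.

Variables (T : finType) (e : rel T).
Hypotheses (e_sym : symmetric e) (e_irr : irreflexive e).

Lemma path_rev_cons a x s : path e a (rev (x :: s)) = e a (last x s) && path e x s.
Proof.
rewrite [x :: s]lastI rev_rcons /= rev_path.
by congr (_ && _); apply: eq_path => y z; exact: e_sym.
Qed.

Lemma cycle_cons_cat_rev x u y w :
  path e x u -> path e y w -> e x y -> e (last x u) (last y w) ->
  cycle e (x :: u ++ rev (y :: w)).
Proof.
move=> pu pw exy elast.
by rewrite /= rcons_cat -rev_cons cat_path pu path_rev_cons /= elast exy.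
Qed.

Lemma belast_map_take (x : T) s :
  belast x s = [seq last x (take j s) | j <- iota 0 (size s)].
Proof.
elim: s x => //= y s IH x; rewrite IH; congr (_ :: _).
by rewrite (iotaDl 1 0) -map_comp.
Qed.

(* Pigeonhole over the edges (p_j, q_j) of p = x0 :: q (Posa): if x0 and
   z = last p have together more neighbours on p than p has edges, then some
   edge satisfies x0 ~ q_j and z ~ p_j. *)
Lemma exists_crossing_split x0 q :
  size q < count (e x0) q + count (e (last x0 q)) (belast x0 q) ->
  exists u y w, [/\ q = u ++ y :: w, e x0 y & e (last x0 q) (last x0 u)].
Proof.
set z := last x0 q => hcount.
pose A j := e x0 (nth x0 q j); pose B j := e z (last x0 (take j q)).
have countA : count (e x0) q = count A (iota 0 (size q)).
  by rewrite -{1}(mkseq_nth x0 q) /mkseq count_map.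
have countB : count (e z) (belast x0 q) = count B (iota 0 (size q)).
  by rewrite belast_map_take count_map.
have : 0 < count (predI A B) (iota 0 (size q)).
  have := count_predUI A B (iota 0 (size q)).
  have := count_size (predU A B) (iota 0 (size q)); rewrite size_iota; lia.
rewrite -has_count => /hasP[j]; rewrite mem_iota /= => jq /andP[Aj Bj].
by exists (take j q), (nth x0 q j), (drop j.+1 q); rewrite -drop_nth ?cat_take_drop.
Qed.

Definition path_in (S : {set T}) (p : seq T) : Prop :=
  [/\ uniq p, sorted e p & {subset p <= S}].

Lemma path_in_rev S p : path_in S p -> path_in S (rev p).
Proof.
case=> up sp pS; split; rewrite ?rev_uniq //; last by move=> v; rewrite mem_rev => /pS.
by rewrite rev_sorted; case: p sp {up pS} => //= x p; rewrite (@eq_path _ _ e) // => a b.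
Qed.

Lemma path_in_rcons S p x y :
  path_in S p -> y \in S -> y \notin p -> e (last x p) y -> path_in S (rcons p y).
Proof.
case=> up sp pS yS yp ey; split; first by rewrite rcons_uniq yp.
  by case: p sp ey {up pS yp} => //= z p; rewrite rcons_path => -> ->.
by move=> v; rewrite mem_rcons inE => /predU1P[-> //|/pS].
Qed.

Lemma path_in_of_cycle_exit (S : {set T}) c x y :
  cycle e c -> uniq c -> {subset c <= S} -> x \in c -> y \in S -> y \notin c -> e y x ->
  exists p, path_in S p /\ size p = (size c).+1.
Proof.
move=> cc uc cS xc yS yc eyx; case: (rot_to xc) => i s cE.
have : cycle e (x :: s) by rewrite -cE rot_cycle.
rewrite /= rcons_path => /andP[ps _].
exists (y :: x :: s); split; last by rewrite -(size_rot i c) cE.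
split; first by rewrite cons_uniq -cE mem_rot rot_uniq yc.
  by rewrite /= eyx.
by move=> v; rewrite inE -cE mem_rot => /predU1P[-> //|/cS].
Qed.

Lemma cycle_of_closed_path (S : {set T}) t x0 q :
  {in S, forall v, t <= deg_in e S v} -> path_in S (x0 :: q) -> (size q).+1 < t.*2 ->
  {in S, forall v, e x0 v -> v \in x0 :: q} ->
  {in S, forall v, e (last x0 q) v -> v \in x0 :: q} ->
  exists2 c, cycle e c & perm_eq c (x0 :: q).
Proof.
move=> mindeg [up sp pS] small closed_x0 closed_z.
have [u [y [w [qE ex0y ezu]]]] :
    exists u y w, [/\ q = u ++ y :: w, e x0 y & e (last x0 q) (last x0 u)].
  apply: exists_crossing_split.
  have deg_x0 : t <= count (e x0) q.
    apply: leq_trans (mindeg _ (pS _ (mem_head _ _))) _.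
    apply: deg_in_le_count => [|v vS ev]; first by case/andP: up.
    by case/predU1P: (closed_x0 v vS ev) => // vx0; rewrite vx0 e_irr in ev.
  have deg_z : t <= count (e (last x0 q)) (belast x0 q).
    have zE := lastI x0 q; rewrite zE rcons_uniq in up; case/andP: up => _ ub.
    apply: leq_trans (mindeg _ (pS _ (mem_last _ _))) _.
    apply: deg_in_le_count => // v vS ev; move: (closed_z v vS ev).
    by rewrite zE mem_rcons => /predU1P[vz|//]; rewrite vz e_irr in ev.
  lia.
exists (x0 :: u ++ rev (y :: w)); last by rewrite qE perm_cons perm_cat2l perm_rev.
move: sp; rewrite qE /= cat_path /= => /and3P[pu _ pw].
apply: cycle_cons_cat_rev => //.
by rewrite e_sym (_ : last y w = last x0 q) // qE last_cat.
Qed.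

Definition connected_in (S : {set T}) : bool :=
  [forall C : {set T},
     (C != set0) && (C \proper S) ==> [exists x in C, exists y in S :\: C, e x y]].

Lemma path_in_extend (S : {set T}) t p :
  connected_in S -> {in S, forall v, t <= deg_in e S v} -> path_in S p ->
  0 < size p < t.*2 -> size p < #|S| -> exists p', path_in S p' /\ size p' = (size p).+1.
Proof.
move=> conn mindeg; case: p => [//|x0 q] pp /andP[_ small] ltS.
case: (boolP [exists y in S, (y \notin x0 :: q) && e (last x0 q) y]).
  case/exists_inP => y yS /andP[yp ey].
  exists (rcons (x0 :: q) y); rewrite size_rcons; split => //.
  exact: (path_in_rcons (x := x0)).
move/exists_inPn => closed_z.
case: (boolP [exists y in S, (y \notin x0 :: q) && e x0 y]).
  case/exists_inP => y yS /andP[yp ey].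
  exists (rcons (rev (x0 :: q)) y); rewrite size_rcons size_rev; split => //.
  apply: (path_in_rcons (x := x0)); [exact: path_in_rev | done | by rewrite mem_rev |].
  by rewrite rev_cons last_rcons.
move/exists_inPn => closed_x0.
have [c cc pc] : exists2 c, cycle e c & perm_eq c (x0 :: q).
  apply: cycle_of_closed_path mindeg pp small _ _ => v vS ev.
    by move: (closed_x0 v vS); rewrite ev andbT negbK.
  by move: (closed_z v vS); rewrite ev andbT negbK.
case: pp => up sp pS.
have : ([set v in x0 :: q] != set0) && ([set v in x0 :: q] \proper S).
  rewrite properEcard cardsE (card_uniqP up); apply/and3P; split => //.
    by apply/set0Pn; exists x0; rewrite inE mem_head.
  by apply/subsetP => v; rewrite inE => /pS.
move/(implyP (forallP conn _)) => /exists_inP[x xp /exists_inP[y]].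
rewrite !inE => /andP[yp yS] exy; rewrite inE in xp.
have cS : {subset c <= S} by move=> v; rewrite (perm_mem pc) => /pS.
have [p' [pp' sz]] : exists p', path_in S p' /\ size p' = (size c).+1.
  apply: (path_in_of_cycle_exit (x := x) cc _ cS _ yS);
    rewrite ?(perm_uniq pc) ?(perm_mem pc) //.
  by rewrite e_sym.
by exists p'; rewrite sz (perm_size pc).
Qed.

Lemma exists_path_in_of_min_deg (S : {set T}) t :
  connected_in S -> {in S, forall v, t <= deg_in e S v} -> t.*2 <= #|S| ->
  exists p, path_in S p /\ size p = t.*2.
Proof.
move=> conn mindeg large.
suff : forall m, m <= t.*2 -> exists p, path_in S p /\ size p = m by apply.
elim=> [|m IH] lt_m; first by exists [::].
have [[|x0 q] [pp sz]] := IH (ltnW lt_m); subst m.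
  have /set0Pn[v vS] : S != set0 by rewrite -card_gt0; lia.
  by exists [:: v]; do 2!split => //; move=> u; rewrite inE => /eqP ->.
have lt_q : (size q).+1 < t.*2 := lt_m.
by apply: (path_in_extend (t := t)) => //=; lia.
Qed.

Theorem erdos_gallai_path t :
  (forall p, uniq p -> sorted e p -> size p != t.*2) ->
  forall S, deg_sum e S <= (t - 1).*2 * #|S|.
Proof.
move=> no_path S; have [n] := ubnP #|S|; elim: n S => // n IH S; rewrite ltnS => leSn.
have [small|large] := ltnP #|S| t.*2.
  apply: leq_trans (deg_sum_le_card e_irr S) _.
  by rewrite mulnC leq_mul2r; apply/orP; right; lia.
have [/exists_inP[v vS low_v]|/exists_inPn high] :=
  boolP [exists v in S, deg_in e S v < t].
  have cardS := cardsD1 v S; rewrite vS add1n in cardS.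
  rewrite (deg_sum_setD1 e_sym e_irr vS) cardS mulnS addnC leq_add ?leq_double //.
    by lia.
  by apply: IH; lia.
have [conn|] := boolP (connected_in S).
  have mindeg : {in S, forall v, t <= deg_in e S v} by move=> v /high; rewrite -leqNgt.
  have [p [[up sp _] sz]] := exists_path_in_of_min_deg conn mindeg large.
  by have := no_path p up sp; rewrite sz eqxx.
rewrite negb_forall => /existsP[C].
rewrite negb_imply => /andP[/andP[C0 CS] /exists_inPn noCD].
have noCD' : {in C & S :\: C, forall x y, ~~ e x y}.
  by move=> x y xC yD; apply: contra (noCD x xC) => exy; apply/exists_inP; exists y.
have cardS := cardsID C S; rewrite (setIidPr (proper_sub CS)) in cardS.
have ltC := proper_card CS; move: C0; rewrite -card_gt0 => C0.
rewrite (deg_sum_split e_sym (proper_sub CS) noCD') -cardS mulnDr.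
by apply: leq_add; apply: IH; lia.
Qed.

End Paths.

Section Core.

Variables (T : finType) (e : rel T) (d : nat).

Definition core : {set T} :=
  \bigcup_(C : {set T} | [forall v in C, d <= deg_in e C v]) C.

Lemma sub_core (C : {set T}) : {in C, forall v, d <= deg_in e C v} -> C \subset core.
Proof. by move=> mindeg; apply: bigcup_sup; apply/forall_inP. Qed.

(* Sets of minimum degree at least d are closed under union, so the core is
   the largest of them. *)
Lemma core_deg v : v \in core -> d <= deg_in e core v.
Proof.
case/bigcupP => C /forall_inP mindeg vC.
exact: leq_trans (mindeg v vC) (deg_in_subset e v (sub_core mindeg)).
Qed.

Lemma core_deg_notin v : v \notin core -> deg_in e core v < d.
Proof.
apply: contraNT; rewrite -leqNgt => deg_v.
suff : v |: core \subset core by move/subsetP; apply; rewrite setU11.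
have core_sub : core \subset v |: core by apply: subsetUr.
apply: sub_core => u; rewrite in_setU1 => /predU1P[-> | /core_deg deg_u].
  exact: leq_trans deg_v (deg_in_subset e v core_sub).
exact: leq_trans deg_u (deg_in_subset e u core_sub).
Qed.

Hypotheses (e_sym : symmetric e) (e_irr : irreflexive e).

Lemma deg_sum_le_core (U : {set T}) :
  core \subset U -> deg_sum e U <= deg_sum e core + (d.-1 * #|U :\: core|).*2.
Proof.
have [n] := ubnP #|U :\: core|; elim: n U => // n IH U; rewrite ltnS => leUn coreU.
have [/forall_inP Ugood|/forall_inPn[v vU]] := boolP [forall v in U, d <= deg_in e U v].
  have -> : U = core by apply/eqP; rewrite eqEsubset coreU sub_core.
  by rewrite setDv cards0 muln0 addn0.
rewrite -ltnNge => low_v.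
have v_core : v \notin core.
  apply: contraTN low_v => /core_deg deg_v.
  by rewrite -leqNgt (leq_trans deg_v) // deg_in_subset.
have coreUv : core \subset U :\ v by rewrite subsetD1 coreU v_core.
have cardD : #|U :\: core| = (#|(U :\ v) :\: core|).+1.
  by rewrite (cardsD1 v) !inE v_core vU setDDl setUC -setDDl.
have := IH (U :\ v); rewrite -cardD => /(_ leUn coreUv).
rewrite (deg_sum_setD1 e_sym e_irr vU) cardD; lia.
Qed.

Lemma num_edges_le_core t :
  (forall p, uniq p -> sorted e p -> size p != t.*2) ->
  num_edges e <= (t - 1) * #|core| + d.-1 * #|~: core|.
Proof.
move=> no_path; rewrite -leq_double doubleD -!mul2n !mulnA !(mulnC 2).
have := deg_sum_le_core (subsetT core); rewrite setTD.
have := erdos_gallai_path e_sym e_irr no_path core.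
have := double_num_edges_le e_sym e_irr.
lia.
Qed.

End Core.

Lemma contains_path_forest_of_path (T : finType) (e : rel T) k (a : nat -> nat)
    (p : seq T) :
  uniq p -> sorted e p -> size p = (\sum_(i < k) a i).*2 -> contains_path_forest e k a.
Proof.
move=> up sp sz_p; pose sh := [seq (a i).*2 | i <- iota 0 k].
have sum_sh : sumn sh = size p.
  rewrite sz_p sumnE big_map -{1}(subn0 k) -/(index_iota 0 k) big_mkord.
  by rewrite -[RHS]muln2 big_distrl; apply: eq_bigr => i _; rewrite -muln2.
have nth_sh i : i < k -> nth 0 sh i = (a i).*2.
  by move=> ik; rewrite (nth_map 0) ?size_iota // nth_iota.
exists (reshape sh p); split; first by rewrite size_reshape size_map size_iota.
  move=> i ik; rewrite nth_reshape nth_sh //; split; last exact/take_sorted/drop_sorted.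
  apply: size_takel; rewrite size_drop -sum_sh.
  have := sumn_cat (take i.+1 sh) (drop i.+1 sh); rewrite cat_take_drop.
  by rewrite (take_nth 0) ?size_map ?size_iota // sumn_rcons nth_sh //; lia.
by rewrite reshapeKr // sum_sh.
Qed.


Theorem lemma3p2 (T : finType) (e : rel T)
  (e_sym : symmetric e) (e_irr : irreflexive e)
  (k : nat) (a : nat -> nat)
  (hk : 2 <= k)
  (ha_dec : forall i j, i <= j -> j < k -> a j <= a i)
  (ha_pos : forall i, i < k -> 1 <= a i) :
  let t := \sum_(i < k) a i in
  t ^ 2 - t - 1 < #|T| ->
  ~ contains_path_forest e k a ->
  (t - 1) * #|T| <= num_edges e + (t ^ 2 - t - 1) ->
  exists S : {set T},
    [/\ #|T| <= #|S| + (t ^ 2 - t - 1),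
        (forall v, v \in S -> t - 1 <= deg_in e S v)
      & (forall v, v \notin S -> deg_in e S v <= t - 2)].
Proof.
move=> t _ no_forest many_edges.
have t_ge2 : 2 <= t.
  have : \sum_(i < k) 1 <= t by apply: leq_sum => i _; apply: ha_pos.
  by rewrite sum_nat_const card_ord muln1; lia.
have no_path p : uniq p -> sorted e p -> size p != t.*2.
  move=> up sp; apply: contra_notN no_forest => /eqP.
  exact: contains_path_forest_of_path.
exists (core e (t - 1)); split; [|exact: core_deg|by move=> v /core_deg_notin; lia].
set S := core e (t - 1).
have := num_edges_le_core (t - 1) e_sym e_irr no_path.
rewrite -/S (_ : (t - 1).-1 = t - 2); last lia.
move: many_edges; rewrite -(cardsC S) mulnDr.
have -> : (t - 1) * #|~: S| = (t - 2) * #|~: S| + #|~: S|.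
  by rewrite addnC -mulSn; congr (_ * _); lia.
lia.
Qed.
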